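(* Let $P$ be a poset with an $\mathbb{R}$-action $\Lambda$, and let $I$ be an interval of $P$. Then for every $\epsilon\ge0$: - $I\subseteq\mathrm{Ex}^\Lambda_\epsilon(I)$; - $\mathrm{Ex}^\Lambda_\epsilon(I)$ is an interval of $P$.
   Context: An interval of a poset $P$ is a nonempty subset $I$ that is convex ($p,q\in I$, $r\in P$, $p\le r\le q$ imply $r\in I$) and connected (any two elements of $I$ are joined by a finite sequence of elements of $I$ with consecutive ones comparable). For $A\subseteq P$ nonempty, $A^\uparrow=\{p\in P:\exists a\in A,\ a\le p\}$ and $A^\downarrow=\{p\in P:\exists a\in A,\ p\le a\}$; by convention $\emptyset^\uparrow=\emptyset^\downarrow=P$. An $\mathbb{R}$-action on $P$ is a family $\{\Lambda_\epsilon\}_{\epsilon\ge0}$ of poset automorphisms of $P$ such that: - $p\le\Lambda_\epsilon(p)$ for all $p$; - $\Lambda_0=\mathrm{id}$; - $\Lambda_\epsilon\circ\Lambda_\zeta=\Lambda_{\epsilon+\zeta}$. The $\Lambda_\epsilon$-thickening of $A\subseteq P$ is $\mathrm{Ex}^\Lambda_\epsilon(A)=\Lambda_\epsilon^{-1}(A)^\uparrow\cap\Lambda_\epsilon(A)^\downarrow$, where $\Lambda_\epsilon^{-1}(A)$ denotes the preimage. *)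

From Stdlib Require Import Reals.
Open Scope R_scope.

Definition is_partial_order {P : Type} (le : P -> P -> Prop) : Prop :=
  (forall p, le p p) /\
  (forall p q, le p q -> le q p -> p = q) /\
  (forall p q r, le p q -> le q r -> le p r).

Definition poset_automorphism {P : Type} (le : P -> P -> Prop) (f : P -> P) : Prop :=
  (exists g : P -> P, (forall p, g (f p) = p) /\ (forall p, f (g p) = p)) /\
  (forall p q, le p q <-> le (f p) (f q)).

(* R-action: a family of automorphisms indexed by eps >= 0
   (Lambda eps is only constrained for eps >= 0). *)
Definition R_action {P : Type} (le : P -> P -> Prop) (Lambda : R -> P -> P) : Prop :=
  (forall eps, 0 <= eps -> poset_automorphism le (Lambda eps)) /\
  (forall eps p, 0 <= eps -> le p (Lambda eps p)) /\
  (forall p, Lambda 0 p = p) /\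
  (forall eps zeta p, 0 <= eps -> 0 <= zeta ->
     Lambda eps (Lambda zeta p) = Lambda (eps + zeta) p).

Definition nonempty {P : Type} (A : P -> Prop) : Prop := exists p, A p.

Definition convex {P : Type} (le : P -> P -> Prop) (A : P -> Prop) : Prop :=
  forall p q r, A p -> A q -> le p r -> le r q -> A r.

Definition comparable {P : Type} (le : P -> P -> Prop) (p q : P) : Prop :=
  le p q \/ le q p.

Inductive zigzag {P : Type} (le : P -> P -> Prop) (A : P -> Prop) : P -> P -> Prop :=
  | zigzag_refl : forall p, A p -> zigzag le A p p
  | zigzag_step : forall p q r, A p -> comparable le p q -> zigzag le A q r ->
                  zigzag le A p r.

Definition connected {P : Type} (le : P -> P -> Prop) (A : P -> Prop) : Prop :=
  forall p q, A p -> A q -> zigzag le A p q.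

Definition is_interval {P : Type} (le : P -> P -> Prop) (I : P -> Prop) : Prop :=
  nonempty I /\ convex le I /\ connected le I.

(* Up- and down-closures, with the convention emptyset^up = emptyset^down = P. *)
Definition upset {P : Type} (le : P -> P -> Prop) (A : P -> Prop) : P -> Prop :=
  fun p => (~ nonempty A) \/ (exists a, A a /\ le a p).
Definition downset {P : Type} (le : P -> P -> Prop) (A : P -> Prop) : P -> Prop :=
  fun p => (~ nonempty A) \/ (exists a, A a /\ le p a).

Definition preimage {P : Type} (f : P -> P) (A : P -> Prop) : P -> Prop :=
  fun p => A (f p).
Definition image {P : Type} (f : P -> P) (A : P -> Prop) : P -> Prop :=
  fun p => exists a, A a /\ f a = p.

Definition thickening {P : Type} (le : P -> P -> Prop) (Lambda : R -> P -> P)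
    (eps : R) (A : P -> Prop) : P -> Prop :=
  fun p => upset le (preimage (Lambda eps) A) p /\ downset le (image (Lambda eps) A) p.

From Stdlib Require Import Reals.
Open Scope R_scope.

(** The thickening only uses two properties of [L := Lambda eps]: [L] is
    surjective and extensive ([p <= L p]).  For [p] in [I], [L^-1 p <= p <= L p]
    puts [p] in the thickening.  An upper closure intersected with a lower
    closure is always convex.  Every point [p] of the thickening lies above some
    [a] with [L a] in [I], and [a] itself lies in the thickening, so the zigzag
    [p >= a <= L a] links [p] to [I]; connectedness of [I] then finishes. *)

Section Zigzag.
Variables (P : Type) (le : P -> P -> Prop).

Lemma zigzag_meml (A : P -> Prop) p q : zigzag le A p q -> A p.
Proof. destruct 1; assumption. Qed.

Lemma zigzag_trans (A : P -> Prop) p q r :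
  zigzag le A p q -> zigzag le A q r -> zigzag le A p r.
Proof.
  induction 1 as [|x y z Ax cxy _ IH]; intros Hzr; [assumption|].
  exact (zigzag_step le A x y r Ax cxy (IH Hzr)).
Qed.

Lemma zigzag_sym (A : P -> Prop) p q : zigzag le A p q -> zigzag le A q p.
Proof.
  induction 1 as [x Ax|x y z Ax cxy Hyz IH]; [now apply zigzag_refl|].
  apply (zigzag_trans A z y x IH).
  apply (zigzag_step le A y x x (zigzag_meml A y z Hyz)).
  - destruct cxy; [right | left]; assumption.
  - now apply zigzag_refl.
Qed.

Lemma zigzag_sub (A B : P -> Prop) p q :
  (forall x, A x -> B x) -> zigzag le A p q -> zigzag le B p q.
Proof.
  intros AB; induction 1 as [x Ax|x y z Ax cxy _ IH].
  - now apply zigzag_refl, AB.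
  - exact (zigzag_step le B x y z (AB x Ax) cxy IH).
Qed.

Lemma connected_of_linked (A B : P -> Prop) :
  (forall x, A x -> B x) -> connected le A ->
  (forall p, B p -> exists x, A x /\ zigzag le B p x) ->
  connected le B.
Proof.
  intros AB connA link p q Bp Bq.
  destruct (link p Bp) as [x [Ax Hpx]], (link q Bq) as [y [Ay Hqy]].
  apply (zigzag_trans B p x q Hpx), (zigzag_trans B x y q).
  - exact (zigzag_sub A B x y AB (connA x y Ax Ay)).
  - exact (zigzag_sym B q y Hqy).
Qed.

Hypothesis le_trans : forall p q r, le p q -> le q r -> le p r.

Lemma upset_le (A : P -> Prop) p q : upset le A p -> le p q -> upset le A q.
Proof.
  intros [A0|[a [Aa le_ap]]] le_pq; [now left|].
  right; exists a; split; [assumption | exact (le_trans a p q le_ap le_pq)].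
Qed.

Lemma downset_le (A : P -> Prop) p q : downset le A q -> le p q -> downset le A p.
Proof.
  intros [A0|[a [Aa le_qa]]] le_pq; [now left|].
  right; exists a; split; [assumption | exact (le_trans p q a le_pq le_qa)].
Qed.

Lemma convex_upset_downset (A B : P -> Prop) :
  convex le (fun p => upset le A p /\ downset le B p).
Proof.
  intros p q r [Ap _] [_ Bq] le_pr le_rq.
  split; [exact (upset_le A p r Ap le_pr) | exact (downset_le B r q Bq le_rq)].
Qed.

End Zigzag.

Section Thickening.
Variables (P : Type) (le : P -> P -> Prop) (Lambda : R -> P -> P) (eps : R).
Hypothesis le_refl : forall p, le p p.
Hypothesis le_trans : forall p q r, le p q -> le q r -> le p r.
Hypothesis Lambda_ge : forall p, le p (Lambda eps p).
Hypothesis Lambda_surj : forall p, exists q, Lambda eps q = p.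

Notation L := (Lambda eps).
Notation Ex := (thickening le Lambda eps).

Lemma sub_thickening (A : P -> Prop) p : A p -> Ex A p.
Proof.
  intros Ap; destruct (Lambda_surj p) as [q Lq].
  split; right.
  - exists q; unfold preimage; rewrite Lq; split; [assumption|].
    rewrite <- Lq; apply Lambda_ge.
  - exists (L p); split; [exists p; split; [assumption | reflexivity] | apply Lambda_ge].
Qed.

Lemma thickening_preimage (A : P -> Prop) a : A (L a) -> Ex A a.
Proof.
  intros ALa; split.
  - right; exists a; split; [assumption | apply le_refl].
  - destruct (sub_thickening A (L a) ALa) as [_ HLa].
    exact (downset_le P le le_trans _ a (L a) HLa (Lambda_ge a)).
Qed.

Lemma thickening_above_preimage (A : P -> Prop) p :
  nonempty A -> Ex A p -> exists a, A (L a) /\ le a p.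
Proof.
  intros [x Ax] [[noA|Hp] _]; [|exact Hp].
  destruct (Lambda_surj x) as [q Lq].
  exfalso; apply noA; exists q; unfold preimage; rewrite Lq; assumption.
Qed.

Lemma thickening_linked (A : P -> Prop) p :
  nonempty A -> Ex A p -> exists x, A x /\ zigzag le (Ex A) p x.
Proof.
  intros neA Exp; destruct (thickening_above_preimage A p neA Exp) as [a [ALa le_ap]].
  exists (L a); split; [assumption|].
  apply (zigzag_step le (Ex A) p a _ Exp (or_intror le_ap)).
  apply (zigzag_step le (Ex A) a (L a) _ (thickening_preimage A a ALa) (or_introl (Lambda_ge a))).
  exact (zigzag_refl le (Ex A) (L a) (sub_thickening A (L a) ALa)).
Qed.

Lemma interval_thickening (I : P -> Prop) : is_interval le I -> is_interval le (Ex I).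
Proof.
  intros [[x Ix] [_ connI]]; split; [|split].
  - exists x; exact (sub_thickening I x Ix).
  - apply convex_upset_downset, le_trans.
  - apply (connected_of_linked P le I (Ex I) (sub_thickening I) connI).
    intros p; apply thickening_linked; exists x; exact Ix.
Qed.

End Thickening.

Theorem proposition2p11 (P : Type) (le : P -> P -> Prop) (Lambda : R -> P -> P)
  (I : P -> Prop) :
  is_partial_order le -> R_action le Lambda -> is_interval le I ->
  forall eps : R, 0 <= eps ->
    (forall p, I p -> thickening le Lambda eps I p) /\
    is_interval le (thickening le Lambda eps I).
Proof.
  intros [le_refl [_ le_trans]] [autoL [Lambda_ext _]] intI eps eps_ge0.
  assert (Lambda_surj : forall p, exists q, Lambda eps q = p).
  { destruct (autoL eps eps_ge0) as [[g [_ Lg]] _]; intros p; exists (g p); apply Lg. }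
  assert (Lambda_ge : forall p, le p (Lambda eps p)) by (intros p; apply Lambda_ext, eps_ge0).
  split.
  - exact (sub_thickening P le Lambda eps Lambda_ge Lambda_surj I).
  - exact (interval_thickening P le Lambda eps le_refl le_trans Lambda_ge Lambda_surj I intI).
Qed.
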